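(* Assume the standing setup below. Let $x\in X$ and let $s\le t$ be phase change numbers of $X$ with $s_1\le s$. Suppose that $[x]_{s,X}=[x]_{t,X}$ (i.e. $(s,[x]_{s,X})\to(t,[x]_{t,X})$ is a partial layer of $X$) and that $y\in[x]_{s,Y}$. Then $[x]_{s,Y}=[x]_{t,Y}$, i.e. $(s,[x]_{s,Y})\to(t,[x]_{t,Y})$ is a partial layer of $Y$.
   Context: For a finite set $Z\subset\mathbb{R}^n$ and a real number $s\ge 0$, the Vietoris–Rips complex $V_s(Z)$ is the simplicial complex with vertex set $Z$ whose simplices are the nonempty subsets $\sigma\subseteq Z$ with $d(z,z')\le s$ for all $z,z'\in\sigma$ ($d$ the Euclidean distance). For $z\in Z$, $[z]_{s,Z}\subseteq Z$ denotes the set of vertices of the path component of $V_s(Z)$ containing $z$. A partial layer for $Z$ is a pair of parameters $s\le t$ and $z\in Z$ (written as an edge $(s,[z]_{s,Z})\to(t,[z]_{t,Z})$) with $[z]_{s,Z}=[z]_{t,Z}$ as subsets of $Z$. Standing setup: $X\subset\mathbb{R}^n$ is a finite set with at least two points, $y\in\mathbb{R}^n\setminus X$, $Y=X\sqcup\{y\}$. The phase change numbers of $X$ are the distinct values $0=s_0<s_1<\dots<s_k$ of $d(x,x')$ for $x,x'\in X$. There are $x_0\in X$ and a real $r>0$ with $d(y,x_0)<r$ and $r<s_{i+1}-s_i$ for all $0\le i<k$. *)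

(* classical reals. Points of R^n are lists of reals of length n. *)
From Stdlib Require Import Reals List.
Open Scope R_scope.

Definition point := list R.

Definition sqdist (p q : point) : R :=
  fold_right Rplus 0 (map (fun ab => (fst ab - snd ab) ^ 2) (combine p q)).
Definition edist (p q : point) : R := sqrt (sqdist p q).

(* Vietoris-Rips complex V_s(Z): nonempty subsets of Z of diameter <= s
   (simplices represented as lists of vertices). *)
Definition VR_simplex (s : R) (Z : list point) (sigma : list point) : Prop :=
  sigma <> nil /\ (forall z, In z sigma -> In z Z) /\
  (forall z z', In z sigma -> In z' sigma -> edist z z' <= s).

(* Vertices a, b are joined by an edge path in V_s(Z): consecutive vertices
   span a simplex of V_s(Z). The path component of z is the set of such b. *)
Inductive vr_conn (s : R) (Z : list point) (a : point) : point -> Prop :=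
| vr_conn_refl : In a Z -> vr_conn s Z a a
| vr_conn_step : forall b c, vr_conn s Z a b -> VR_simplex s Z (b :: c :: nil) ->
    vr_conn s Z a c.

(* [z]_{s,Z} as a predicate on points (a subset of Z). *)
Definition vr_comp (s : R) (Z : list point) (z : point) : point -> Prop :=
  fun w => vr_conn s Z z w.

Definition same_set (A B : point -> Prop) : Prop := forall w, A w <-> B w.

(* Phase change numbers of X: values d(x,x') for x, x' in X. *)
Definition is_phase (X : list point) (u : R) : Prop :=
  exists a b, In a X /\ In b X /\ edist a b = u.

Definition is_s1 (X : list point) (u : R) : Prop :=
  is_phase X u /\ 0 < u /\ forall v, is_phase X v -> 0 < v -> u <= v.

Definition consecutive_phase (X : list point) (a b : R) : Prop :=
  is_phase X a /\ is_phase X b /\ a < b /\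
  ~ (exists c, is_phase X c /\ a < c /\ c < b).

From Stdlib Require Import Reals List Lra Psatz Classical.
Open Scope R_scope.

(* Write Y = y :: X.  Since y lies in [x]_{s,Y}, some vertex b of
   [x]_{s,X} is at distance <= s from y, hence at distance < s + r from x0.
   The distances between points of X are phase change numbers, and no phase
   change number lies in the open interval (u, u + r) above a phase change
   number u (the gap hypothesis); so d(b, x0) <= s and x0 lies in [x]_{s,X}.
   By the same argument every point c of X with d(y, c) <= t satisfies
   d(x0, c) <= t, so c lies in [x]_{t,X}. *)

(* One-coordinate step of Minkowski's inequality:
   |(u+v, c)| <= |(u, p)| + |(v, q)| as soon as |c| <= |p| + |q|. *)
Lemma sqrt_cons_triangle u v U V C : 0 <= U -> 0 <= V -> 0 <= C ->
  sqrt C <= sqrt U + sqrt V ->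
  sqrt ((u + v) ^ 2 + C) <= sqrt (u ^ 2 + U) + sqrt (v ^ 2 + V).
Proof.
  intros HU HV HC H.
  pose proof (sqrt_pos U) as Hp. pose proof (sqrt_pos V) as Hq.
  pose proof (sqrt_pos C) as Hc.
  set (p := sqrt U) in *. set (q := sqrt V) in *.
  assert (EU : U = p ^ 2) by (unfold p; rewrite pow2_sqrt; auto).
  assert (EV : V = q ^ 2) by (unfold q; rewrite pow2_sqrt; auto).
  assert (HC2 : C <= (p + q) ^ 2).
  { rewrite <- (pow2_sqrt C) by auto. apply pow_incr; lra. }
  apply Rle_trans with (sqrt ((u + v) ^ 2 + (p + q) ^ 2)).
  { apply sqrt_le_1_alt; lra. }
  rewrite EU, EV.
  set (A := sqrt (u ^ 2 + p ^ 2)). set (B := sqrt (v ^ 2 + q ^ 2)).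
  assert (HA : 0 <= A) by apply sqrt_pos. assert (HB : 0 <= B) by apply sqrt_pos.
  assert (A2 : A ^ 2 = u ^ 2 + p ^ 2) by (unfold A; rewrite pow2_sqrt; nra).
  assert (B2 : B ^ 2 = v ^ 2 + q ^ 2) by (unfold B; rewrite pow2_sqrt; nra).
  rewrite <- (sqrt_pow2 (A + B)) by lra.
  apply sqrt_le_1_alt.
  (* Cauchy-Schwarz in the plane: u v + p q <= A B. *)
  assert (Hcs : (u * v + p * q) ^ 2 <= (A * B) ^ 2).
  { replace ((A * B) ^ 2) with (A ^ 2 * B ^ 2) by ring. rewrite A2, B2.
    pose proof (pow2_ge_0 (u * q - v * p)). nra. }
  assert (HAB : 0 <= A * B) by nra.
  assert (u * v + p * q <= A * B) by nra.
  nra.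
Qed.

Lemma sqdist_cons a p b q : sqdist (a :: p) (b :: q) = (a - b) ^ 2 + sqdist p q.
Proof. reflexivity. Qed.

Lemma sqdist_nonneg p q : 0 <= sqdist p q.
Proof.
  revert q; induction p as [|a p IH]; intros [|b q]; try (unfold sqdist; simpl; lra).
  rewrite sqdist_cons. specialize (IH q). pose proof (pow2_ge_0 (a - b)). lra.
Qed.

Lemma edist_sym p q : edist p q = edist q p.
Proof.
  unfold edist; f_equal. revert q; induction p as [|a p IH]; intros [|b q]; try reflexivity.
  rewrite !sqdist_cons, IH. ring.
Qed.

Lemma edist_refl p : edist p p = 0.
Proof.
  unfold edist. replace (sqdist p p) with 0 by
    (induction p as [|a p IH]; [reflexivity|]; rewrite sqdist_cons, <- IH; ring).
  apply sqrt_0.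
Qed.

Lemma edist_triangle p q w : length p = length q -> length q = length w ->
  edist p w <= edist p q + edist q w.
Proof.
  unfold edist. revert q w; induction p as [|a p IH]; intros [|b q] [|c w] H1 H2;
    simpl in H1, H2; try discriminate.
  - unfold sqdist; simpl. rewrite sqrt_0. lra.
  - rewrite !sqdist_cons. replace (a - c) with ((a - b) + (b - c)) by ring.
    apply sqrt_cons_triangle; try apply sqdist_nonneg. apply IH; lia.
Qed.

Lemma least_above (u : R) (L : list R) : (exists e, In e L /\ u < e) ->
  exists m, In m L /\ u < m /\ forall e, In e L -> u < e -> m <= e.
Proof.
  induction L as [|a L IH]; intros [e [He1 He2]]; [destruct He1|].
  destruct (classic (exists e, In e L /\ u < e)) as [Hex|Hn].
  - destruct (IH Hex) as [m [Hm1 [Hm2 Hm3]]].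
    destruct (Rlt_dec u a) as [Ha|Ha]; [destruct (Rle_dec a m) as [Ham|Ham]|].
    + exists a. split; [left; auto|]. split; auto.
      intros e' [<-|He'] Hu; [lra|]. specialize (Hm3 e' He' Hu); lra.
    + exists m. split; [right; auto|]. split; auto.
      intros e' [<-|He'] Hu; [lra|auto].
    + exists m. split; [right; auto|]. split; auto.
      intros e' [<-|He'] Hu; [lra|auto].
  - exists a. destruct He1 as [<-|He1]; [|exfalso; apply Hn; eauto].
    split; [left; auto|]. split; auto.
    intros e' [<-|He'] Hu; [lra|]. exfalso; apply Hn; eauto.
Qed.

Definition phases (X : list point) : list R :=
  flat_map (fun a => map (fun b => edist a b) X) X.

Lemma phases_spec X c : In c (phases X) <-> is_phase X c.
Proof.
  unfold phases, is_phase. rewrite in_flat_map. split.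
  - intros [a [Ha Hc]]. apply in_map_iff in Hc. destruct Hc as [b [Hb1 Hb2]]. eauto.
  - intros [a [b [Ha [Hb He]]]]. exists a. split; auto. apply in_map_iff. eauto.
Qed.

Lemma next_phase X u d : is_phase X u -> is_phase X d -> u < d ->
  exists c, consecutive_phase X u c /\ c <= d.
Proof.
  intros Hu Hd Hud.
  destruct (least_above u (phases X)) as [m [Hm1 [Hm2 Hm3]]].
  { exists d; split; auto. apply phases_spec; auto. }
  apply phases_spec in Hm1.
  exists m. split.
  - repeat split; auto. intros [c [Hc1 [Hc2 Hc3]]].
    apply phases_spec in Hc1. specialize (Hm3 c Hc1 Hc2). lra.
  - apply Hm3; auto. apply phases_spec; auto.
Qed.

Lemma phase_gap X r u d : (forall a b, consecutive_phase X a b -> r < b - a) ->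
  is_phase X u -> is_phase X d -> d < u + r -> d <= u.
Proof.
  intros Hgap Hu Hd Hlt. destruct (Rle_dec d u) as [H|H]; auto.
  destruct (next_phase X u d Hu Hd) as [c [Hc1 Hc2]]; [lra|].
  specialize (Hgap _ _ Hc1). lra.
Qed.

Lemma edge_simplex_iff s Z a b :
  VR_simplex s Z (a :: b :: nil) <-> In a Z /\ In b Z /\ edist a b <= s.
Proof.
  split.
  - intros [_ [HZ Hd]]. repeat split; [apply HZ | apply HZ | apply Hd]; simpl; auto.
  - intros [Ha [Hb Hab]].
    assert (0 <= s) by (pose proof (sqrt_pos (sqdist a b)); unfold edist in Hab; lra).
    split; [discriminate|]. split.
    + intros z [<-|[<-|[]]]; auto.
    + intros z z' [<-|[<-|[]]] [<-|[<-|[]]];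
        rewrite ?edist_refl; auto; rewrite edist_sym; auto.
Qed.

Lemma conn_in s Z a b : vr_conn s Z a b -> In b Z.
Proof.
  induction 1 as [|b c _ _ Hsim]; auto. apply edge_simplex_iff in Hsim; tauto.
Qed.

Lemma conn_edge s Z a b c :
  vr_conn s Z a b -> In c Z -> edist b c <= s -> vr_conn s Z a c.
Proof.
  intros Hab Hc Hbc. apply vr_conn_step with b; auto.
  apply edge_simplex_iff. split; [eapply conn_in; eauto | auto].
Qed.

Lemma conn_mono s t Z a b : s <= t -> vr_conn s Z a b -> vr_conn t Z a b.
Proof.
  intros Hst. induction 1 as [|b c Hab IH Hsim]; [constructor; auto|].
  apply edge_simplex_iff in Hsim. destruct Hsim as [_ [Hc Hbc]].
  apply conn_edge with b; auto; lra.
Qed.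

Lemma conn_extend s y X a b : vr_conn s X a b -> vr_conn s (y :: X) a b.
Proof.
  induction 1 as [|b c _ IH Hsim]; [constructor; simpl; auto|].
  apply edge_simplex_iff in Hsim. apply conn_edge with b; simpl; tauto.
Qed.

Lemma path_through_new_point s y X a w : In a X -> vr_conn s (y :: X) a w ->
  vr_conn s X a w \/ exists b, vr_conn s X a b /\ edist b y <= s.
Proof.
  intros HaX. induction 1 as [Ha|b c _ IH Hsim]; [left; constructor; auto|].
  destruct IH as [IH|IH]; [|right; auto].
  apply edge_simplex_iff in Hsim. destruct Hsim as [Hb [[<-|Hc] Hbc]].
  - right. eauto.
  - left. apply conn_edge with b; auto.
Qed.

Lemma component_with_new_point t y X a w :
  (forall c, In c X -> edist y c <= t -> vr_conn t X a c) ->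
  vr_conn t (y :: X) a w -> w = y \/ vr_conn t X a w.
Proof.
  intros Hnb. induction 1 as [Ha|b c _ IH Hsim].
  - destruct Ha as [<-|Ha]; [left; auto | right; constructor; auto].
  - apply edge_simplex_iff in Hsim. destruct Hsim as [Hb [[<-|Hc] Hbc]]; [left; auto|right].
    destruct IH as [->|IH]; [apply Hnb; auto | apply conn_edge with b; auto].
Qed.

Section NewPointNearAnchor.

Variables (n : nat) (X : list point) (y x0 : point) (r : R).
Hypothesis HXdim : forall p, In p X -> length p = n.
Hypothesis Hydim : length y = n.
Hypothesis Hx0 : In x0 X.
Hypothesis Hyx0 : edist y x0 < r.
Hypothesis Hgap : forall a b, consecutive_phase X a b -> r < b - a.

Lemma close_to_new_point_close_to_anchor c u :
  In c X -> is_phase X u -> edist c y <= u -> edist c x0 <= u.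
Proof.
  intros Hc Hu Hcy.
  assert (Htri : edist c x0 <= edist c y + edist y x0).
  { apply edist_triangle; rewrite Hydim, ?(HXdim x0); auto. }
  apply (phase_gap X r); auto; [exists c, x0; auto | lra].
Qed.

Lemma anchor_in_component s a : ~ In y X -> In a X -> is_phase X s ->
  vr_conn s (y :: X) a y -> vr_conn s X a x0.
Proof.
  intros HyX HaX Hs Hy.
  destruct (path_through_new_point s y X a y HaX Hy) as [Hy'|[b [Hab Hby]]].
  - exfalso. exact (HyX (conn_in _ _ _ _ Hy')).
  - apply conn_edge with b; auto.
    apply close_to_new_point_close_to_anchor; auto. eapply conn_in; eauto.
Qed.

Lemma neighbours_of_new_point t a c : is_phase X t -> vr_conn t X a x0 ->
  In c X -> edist y c <= t -> vr_conn t X a c.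
Proof.
  intros Ht Hax0 Hc Hyc. apply conn_edge with x0; auto.
  rewrite edist_sym. apply close_to_new_point_close_to_anchor; auto.
  rewrite edist_sym; auto.
Qed.

End NewPointNearAnchor.

Theorem corollary13 (n : nat) (X : list point) (y x0 : point) (r : R)
  (x : point) (s t : R)
  (HXdim : forall p, In p X -> length p = n)
  (HXnodup : NoDup X)
  (HX2 : (2 <= length X)%nat)
  (Hydim : length y = n)
  (HyX : ~ In y X)
  (Hx0 : In x0 X)
  (Hr : 0 < r)
  (Hyx0 : edist y x0 < r)
  (Hgap : forall a b, consecutive_phase X a b -> r < b - a)
  (HxX : In x X)
  (Hs : is_phase X s) (Ht : is_phase X t) (Hst : s <= t)
  (Hs1 : exists s1, is_s1 X s1 /\ s1 <= s)
  (Hlayer : same_set (vr_comp s X x) (vr_comp t X x))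
  (Hy : vr_comp s (y :: X) x y) :
  same_set (vr_comp s (y :: X) x) (vr_comp t (y :: X) x).
Proof.
  unfold same_set, vr_comp in *.
  assert (Hx0s : vr_conn s X x x0)
    by (apply (anchor_in_component n X y x0 r); auto).
  assert (Hnb : forall c, In c X -> edist y c <= t -> vr_conn t X x c).
  { intros c Hc Hyc. apply (neighbours_of_new_point n X y x0 r); auto.
    apply (conn_mono s); auto. }
  intros w; split; [apply conn_mono; auto|].
  intros Hw.
  destruct (component_with_new_point t y X x w Hnb Hw) as [->|HwX]; auto.
  apply conn_extend, Hlayer, HwX.
Qed.
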